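(* The partial order $\unlhd$ on $(\mathbb{M}_{\mathrm{GHP}},d_{\mathrm{GHP}})$ is closed, i.e. its graph $\{(\mathcal{X},\mathcal{X}'):\mathcal{X}\unlhd\mathcal{X}'\}$ is closed in $\mathbb{M}_{\mathrm{GHP}}\times\mathbb{M}_{\mathrm{GHP}}$; equivalently, if $\mathcal{X}_n\to\mathcal{X}_\infty$, $\mathcal{X}'_n\to\mathcal{X}'_\infty$ and $\mathcal{X}_n\unlhd\mathcal{X}'_n$ for all $n$, then $\mathcal{X}_\infty\unlhd\mathcal{X}'_\infty$.
   Context: $\mathbb{M}_{\mathrm{GHP}}$ is the space of measure-preserving isometry classes of compact metric spaces with a finite Borel measure, with the Gromov--Hausdorff--Prokhorov metric $d_{\mathrm{GHP}}$ (infimum over common isometric embeddings of Hausdorff distance of images plus Prokhorov distance of pushed-forward measures). $[X,d,\mu]\unlhd[X',d',\mu']$ means there is a surjective map $\phi:X'\to X$ with $d(\phi(x'),\phi(y'))\le d'(x',y')$ for all $x',y'\in X'$ and $\mu(A)\le\mu'(\phi^{-1}(A))$ for all Borel $A\subset X$. *)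

From HB Require Import structures.
From mathcomp Require Import all_boot all_order all_algebra.
From mathcomp Require Import all_classical all_reals all_analysis.
Set Implicit Arguments. Unset Strict Implicit. Unset Printing Implicit Defensive.
Import Order.TTheory GRing.Theory Num.Theory numFieldNormedType.Exports.
Local Open Scope classical_set_scope.
Local Open Scope ring_scope.

Record metric_space (R : realType) := MetricSpace {
  ms_car :> Type;
  ms_dist : ms_car -> ms_car -> R;
  ms_dist_eq0 : forall x y, ms_dist x y = 0 <-> x = y;
  ms_dist_sym : forall x y, ms_dist x y = ms_dist y x;
  ms_dist_tri : forall x y z, ms_dist x z <= ms_dist x y + ms_dist y z }.

Section metric_notions.
Context {R : realType} (X : metric_space R).

Definition ms_ball (x : X) (e : R) : set X := [set y | ms_dist x y < e].

Definition ms_open (U : set X) : Prop :=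
  forall x, U x -> exists2 e : R, 0 < e & ms_ball x e `<=` U.

Definition ms_closed (F : set X) : Prop := ms_open (~` F).

Definition ms_nbhd (A : set X) (e : R) : set X :=
  [set z | exists2 x, A x & ms_dist x z < e].

Definition ms_compact : Prop :=
  forall C : set (set X), (forall U, C U -> ms_open U) ->
    (forall x, exists2 U, C U & U x) ->
    exists s : seq (set X), (forall U, U \in s -> C U) /\
      (forall x, exists2 U, U \in s & U x).

Definition ms_borel : set (set X) := <<s setT, ms_open >>.

Definition finite_borel_measure (mu : set X -> R) : Prop :=
  [/\ mu set0 = 0,
      forall A, ms_borel A -> 0 <= mu A &
      forall F : nat -> set X, (forall n, ms_borel (F n)) -> trivIset setT F ->
        (fun n => \sum_(0 <= k < n) mu (F k)) @ \oo --> mu (\bigcup_k F k)].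

Definition hausdorff_dist (A B : set X) : R :=
  inf [set e : R | 0 < e /\ A `<=` ms_nbhd B e /\ B `<=` ms_nbhd A e].

Definition prokhorov_dist (mu nu : set X -> R) : R :=
  inf [set e : R | 0 < e /\ forall F, ms_closed F ->
         mu F <= nu (ms_nbhd F e) + e /\ nu F <= mu (ms_nbhd F e) + e].
End metric_notions.

Definition isometric_embedding {R : realType} (X Z : metric_space R)
  (f : X -> Z) : Prop := forall x y, ms_dist (f x) (f y) = ms_dist x y.

Record cmm_space (R : realType) := CMMSpace {
  cmm_ms :> metric_space R;
  cmm_point : cmm_ms;
  cmm_compact : ms_compact cmm_ms;
  cmm_mu : set cmm_ms -> R;
  cmm_measure : finite_borel_measure cmm_mu }.

Definition d_GHP {R : realType} (X Y : cmm_space R) : R :=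
  inf [set r : R | exists (Z : metric_space R) (f : X -> Z) (g : Y -> Z),
    [/\ isometric_embedding f, isometric_embedding g &
        r = hausdorff_dist (f @` setT) (g @` setT) +
            prokhorov_dist (fun B => @cmm_mu _ X (f @^-1` B))
                           (fun B => @cmm_mu _ Y (g @^-1` B))]].

Definition ghp_le {R : realType} (X X' : cmm_space R) : Prop :=
  exists phi : X' -> X,
    [/\ forall x : X, exists x' : X', phi x' = x,
        forall x' y' : X', ms_dist (phi x') (phi y') <= ms_dist x' y' &
        forall A : set X, ms_borel A -> @cmm_mu _ X A <= @cmm_mu _ X' (phi @^-1` A)].

(** Unpack d_GHP(X_n, X_oo) < eps_n and d_GHP(X'_n, X'_oo) < eps_n into
    correspondences realised in common metric spaces.  Following a point of
    X'_oo to a nearby point of X'_n, applying phi_n : X'_n -> X_n and moving to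
    a nearby point of X_oo gives a map psi_n : X'_oo -> X_oo that is 1-Lipschitz,
    onto and measure-dominating up to errors of order eps_n; for the measures
    the Prokhorov bounds are used on both sides of phi_n.  The psi_n need not
    converge, but by compactness of X_oo they have an ultralimit Phi along a
    free ultrafilter.  The errors vanish in the limit, so Phi is 1-Lipschitz,
    onto (compactness of X'_oo again) and mu(F) <= mu'(Phi^-1 F) for closed F,
    by continuity from above of mu' o Phi^-1 along the neighbourhoods F^r.
    Inner regularity of finite Borel measures on metric spaces extends this
    inequality to all Borel sets. *)

From mathcomp Require Import all_boot all_order all_algebra.
From mathcomp Require Import all_classical all_reals all_analysis.
From mathcomp Require Import lra.
Import Order.TTheory GRing.Theory Num.Theory numFieldNormedType.Exports.
Local Open Scope classical_set_scope.
Local Open Scope ring_scope.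

Section metric_basics.
Context {R : realType} {X : metric_space R}.

Lemma ms_dist_xx (x : X) : ms_dist x x = 0.
Proof. exact/ms_dist_eq0. Qed.

Lemma ms_dist_ge0 (x y : X) : 0 <= ms_dist x y.
Proof.
have := ms_dist_tri x y x; rewrite ms_dist_xx (ms_dist_sym y x); lra.
Qed.

Lemma ms_ball_open (x : X) e : ms_open (ms_ball x e).
Proof.
move=> y /= hy; exists (e - ms_dist x y); first by rewrite subr_gt0.
move=> z; rewrite /ms_ball /= => hz; have := ms_dist_tri x y z; lra.
Qed.

Lemma ms_nbhd_open (A : set X) e : ms_open (ms_nbhd A e).
Proof.
move=> y [x Ax hxy]; exists (e - ms_dist x y); first by rewrite subr_gt0.
move=> z; rewrite /ms_ball /= => hz; exists x => //; have := ms_dist_tri x y z; lra.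
Qed.

Lemma ms_nbhdS (A : set X) e : 0 < e -> A `<=` ms_nbhd A e.
Proof. by move=> e0 x Ax; exists x; rewrite ?ms_dist_xx. Qed.

Lemma ms_nbhd_le (A : set X) {e1 e2} : e1 <= e2 -> ms_nbhd A e1 `<=` ms_nbhd A e2.
Proof. by move=> h z [x Ax hx]; exists x => //; apply: lt_le_trans h. Qed.

Lemma ms_openT : ms_open (@setT X). Proof. by move=> x _; exists 1. Qed.

Lemma ms_open_setI (A B : set X) : ms_open A -> ms_open B -> ms_open (A `&` B).
Proof.
move=> oA oB x [/oA [e e0 h] /oB [e' e0' h']]; exists (Num.min e e').
  by rewrite lt_min e0 e0'.
by move=> y /= hy; split; [apply: h|apply: h']; apply: lt_le_trans hy _;
  rewrite ge_min lexx ?orbT.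
Qed.

Lemma ms_open_bigcup (A : nat -> set X) :
  (forall n, ms_open (A n)) -> ms_open (\bigcup_n A n).
Proof. by move=> oA x [n _ /oA [e e0 h]]; exists e => // y /h; exists n. Qed.

Lemma ms_closed0 : ms_closed (@set0 X).
Proof. by rewrite /ms_closed setC0; exact: ms_openT. Qed.

Lemma ms_closed_setU (A B : set X) :
  ms_closed A -> ms_closed B -> ms_closed (A `|` B).
Proof. by rewrite /ms_closed setCU; apply: ms_open_setI. Qed.

Lemma ms_closed_bigcup_ord {F : nat -> set X} N :
  (forall k, ms_closed (F k)) -> ms_closed (\bigcup_(k in `I_N) F k).
Proof.
move=> cF; rewrite bigcup_mkord.
apply: (big_ind (fun S => ms_closed S)) => //; [exact: ms_closed0 | exact: ms_closed_setU].
Qed.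

Definition ms_closure (A : set X) : set X :=
  [set z | forall d, 0 < d -> exists2 x, A x & ms_dist x z < d].

Lemma ms_closure_closed A : ms_closed (ms_closure A).
Proof.
move=> z /= nz.
have [d d0 hd] : exists2 d, 0 < d & forall x, A x -> d <= ms_dist x z.
  apply: contrapT => hn; apply: nz => d d0; apply: contrapT => hn2; apply: hn.
  exists d => // x Ax; rewrite leNgt; apply/negP => hlt; apply: hn2; by exists x.
exists d => // y; rewrite /ms_ball /= => hy cy.
have [|x' Ax' hx'] := cy (d - ms_dist z y); first by rewrite subr_gt0.
have := hd _ Ax'; have := ms_dist_tri x' y z; rewrite (ms_dist_sym y z); lra.
Qed.

Lemma ms_sub_closure A : A `<=` ms_closure A.
Proof. by move=> x Ax d d0; exists x; rewrite ?ms_dist_xx. Qed.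

Lemma ms_nbhd_closure A e : ms_nbhd (ms_closure A) e `<=` ms_nbhd A e.
Proof.
move=> z [y cy hyz]; have [|x Ax hx] := cy (e - ms_dist y z); first by rewrite subr_gt0.
exists x => //; have := ms_dist_tri x y z; lra.
Qed.

Lemma ms_closure_id A : ms_closed A -> ms_closure A `<=` A.
Proof.
move=> cA z cz; apply: contrapT => nAz; have [d d0 hd] := cA z nAz.
have [x Ax hx] := cz d d0; apply: (hd x) => //.
by rewrite /ms_ball /= ms_dist_sym.
Qed.

Lemma ms_closed_bigcap_nbhd (F : set X) : ms_closed F ->
  \bigcap_k ms_nbhd F (k.+1%:R^-1) = F.
Proof.
move=> cF; apply/seteqP; split; last first.
  by move=> x Fx k _; apply: ms_nbhdS => //; rewrite invr_gt0.
move=> z hz; apply: (ms_closure_id _ cF) => d d0.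
have [N _ /(_ N (leqnn N)) hN] := near_infty_natSinv_lt (PosNum d0).
by have [x Fx hx] := hz N I; exists x => //; apply: lt_trans hN.
Qed.

End metric_basics.

Section lipschitz.
Context {R : realType}.

Definition lip1 {X Y : metric_space R} (f : X -> Y) :=
  forall x y, ms_dist (f x) (f y) <= ms_dist x y.

Lemma iso_lip1 {X Y : metric_space R} {f : X -> Y} :
  isometric_embedding f -> lip1 f.
Proof. by move=> h x y; rewrite h. Qed.

Context {X Y : metric_space R} {f : X -> Y} (hf : lip1 f).

Lemma lip1_open {O} : ms_open O -> ms_open (f @^-1` O).
Proof.
move=> oO x Ox; have [e e0 he] := oO _ Ox; exists e => // y hy; apply: he.
exact: le_lt_trans (hf x y) hy.
Qed.

Lemma lip1_closed {F} : ms_closed F -> ms_closed (f @^-1` F).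
Proof. exact: lip1_open. Qed.

End lipschitz.

Section borel.
Context {R : realType} {X : metric_space R}.
Local Notation B := (@ms_borel R X).

Lemma borel0 : B set0. Proof. exact: sigma_algebra0. Qed.

Lemma borelC {A} : B A -> B (~` A).
Proof. by rewrite -setTD; exact: sigma_algebraCD. Qed.

Lemma borelT : B setT. Proof. by rewrite -setC0; apply: borelC; exact: borel0. Qed.

Lemma borel_bigcup {F : nat -> set X} : (forall n, B (F n)) -> B (\bigcup_n F n).
Proof. exact: sigma_algebra_bigcup. Qed.

Lemma borelU {A C} : B A -> B C -> B (A `|` C).
Proof.
by move=> hA hC; rewrite -bigcup2E; apply: borel_bigcup => -[|[|n]] //=; exact: borel0.
Qed.

Lemma borelI {A C} : B A -> B C -> B (A `&` C).
Proof.
move=> hA hC; rewrite -(setCK (A `&` C)) setCI.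
by apply: borelC; apply: borelU; exact: borelC.
Qed.

Lemma borelD {A C} : B A -> B C -> B (A `\` C).
Proof. by move=> hA hC; rewrite setDE; apply: borelI => //; exact: borelC. Qed.

Lemma open_borel {A} : ms_open A -> B A.
Proof. exact: sub_sigma_algebra. Qed.

Lemma closed_borel {A} : ms_closed A -> B A.
Proof. by move=> cA; rewrite -(setCK A); apply: borelC; exact: open_borel. Qed.

Lemma lip1_borel {Y : metric_space R} {f : X -> Y} {A} :
  lip1 f -> ms_borel A -> B (f @^-1` A).
Proof.
move=> hf; move: A; suff : @ms_borel R Y `<=` [set A | B (f @^-1` A)] by apply.
apply: smallest_sub; last by move=> O oO; apply: open_borel; exact: lip1_open.
split => /=.
- by rewrite preimage_set0; exact: borel0.
- by move=> A hA; rewrite setTD preimage_setC; exact: borelC.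
- by move=> A hA; rewrite preimage_bigcup; exact: borel_bigcup.
Qed.

End borel.

Section measure_basics.
Context {R : realType} {X : metric_space R} {mu : set X -> R}
  (hmu : finite_borel_measure mu).
Local Notation B := (@ms_borel R X).

Lemma mu0 : mu set0 = 0. Proof. by case: hmu. Qed.

Lemma mu_ge0 {A} : B A -> 0 <= mu A. Proof. by case: hmu => _ h _; exact: h. Qed.

Lemma mu_sigma_additive {F : nat -> set X} : (forall n, B (F n)) -> trivIset setT F ->
  (fun n => \sum_(0 <= k < n) mu (F k)) @ \oo --> mu (\bigcup_k F k).
Proof. by case: hmu => _ _ h; exact: h. Qed.

Lemma mu_add {A C} : B A -> B C -> A `&` C = set0 -> mu (A `|` C) = mu A + mu C.
Proof.
move=> hA hC hAC.
have hB n : B (bigcup2 A C n) by case: n => [|[|n]] //=; exact: borel0.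
have := mu_sigma_additive hB (eq_ind _ id hAC _ (trivIset_bigcup2 A C)).
rewrite bigcup2E => /cvg_unique; apply => //; apply: cvg_near_cst.
exists 2%N => // n /= hn; rewrite (big_cat_nat _ hn) //= big_nat_recr //= big_nat1 /=.
rewrite big_nat_cond big1 ?addr0 // => k /andP [/andP [hk _] _].
by case: k hk => [|[|k]] //= _; rewrite mu0.
Qed.

Lemma mu_setD {A C} : B A -> B C -> C `<=` A -> mu (A `\` C) = mu A - mu C.
Proof.
move=> hA hC CA; rewrite -[in mu A](setDUK CA) setUC mu_add ?addrK //.
- exact: borelD.
- by rewrite setDE -setIA setICl setI0.
Qed.

Lemma mu_mono {A C} : B A -> B C -> A `<=` C -> mu A <= mu C.
Proof.
move=> hA hC AC; rewrite -subr_ge0 -mu_setD //; apply: mu_ge0; exact: borelD.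
Qed.

Lemma mu_le_setT {A} : B A -> mu A <= mu setT.
Proof. by move=> hA; apply: mu_mono => //; exact: borelT. Qed.

Lemma nondecreasing_cvg_mu {A : nat -> set X} : (forall n, B (A n)) ->
  (forall n, A n `<=` A n.+1) -> (fun n => mu (A n)) @ \oo --> mu (\bigcup_n A n).
Proof.
move=> hA inc.
have nd : nondecreasing_seq A.
  by apply/nondecreasing_seqP => n; apply/subsetPset; exact: inc.
have hD n : B (seqD A n) by case: n => [|n] //=; exact: borelD.
have := mu_sigma_additive hD (trivIset_seqD nd); rewrite eq_bigcup_seqD -cvg_shiftS.
suff -> : (fun n => mu (A n)) = (fun n => \sum_(0 <= k < n.+1) mu (seqD A k)) by [].
apply: funext; elim=> [|n ih]; first by rewrite big_nat1.
rewrite big_nat_recr //= -ih [in LHS](setU_seqD nd) mu_add //=; first exact: borelD.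
by rewrite setDE setICA setICr setI0.
Qed.

Lemma nonincreasing_cvg_mu {A : nat -> set X} : (forall n, B (A n)) ->
  (forall n, A n.+1 `<=` A n) -> (fun n => mu (A n)) @ \oo --> mu (\bigcap_n A n).
Proof.
move=> hA dec.
have hI : B (\bigcap_n A n).
  rewrite -(setCK (\bigcap_n A n)) setC_bigcap; apply: borelC.
  by apply: borel_bigcup => n; exact: borelC.
have muC S : B S -> mu S = mu setT - mu (~` S).
  by move=> hS; have := mu_setD borelT hS (@subsetT _ S); rewrite setTD; lra.
have -> : (fun n => mu (A n)) = (cst (mu setT) - (fun n => mu (~` A n)))%R.
  by apply: funext => n; exact: muC.
rewrite (muC _ hI) setC_bigcap; apply: cvgB; first exact: cvg_cst.
exact: nondecreasing_cvg_mu (fun n => borelC (hA n)) (fun n => subsetC (dec n)).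
Qed.

Lemma mu_sigma_subadditive {C : nat -> set X} {S} : (forall n, B (C n)) ->
  (forall n, \sum_(0 <= k < n) mu (C k) <= S) -> mu (\bigcup_n C n) <= S.
Proof.
move=> hC hS.
have hD n : B (seqDU C n).
  apply: borelD => //; apply: (big_ind (fun S => B S)) => //; first exact: borel0.
  by move=> *; exact: borelU.
have h := mu_sigma_additive hD (trivIset_seqDU C); rewrite -seqDU_bigcup_eq in h.
rewrite -(cvg_lim _ h) //; apply: limr_le; first exact: cvgP h.
near=> n; apply: le_trans (hS n); apply: ler_sum => k _.
apply: mu_mono => //; exact: subset_seqDU.
Unshelve. all: by end_near.
Qed.

Lemma mu_nbhd_closed {F t} : ms_closed F -> 0 < t ->
  exists2 r, 0 < r & mu (ms_nbhd F r) <= mu F + t.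
Proof.
move=> cF t0; pose O k := ms_nbhd F (k.+1%:R^-1).
have hO k : B (O k) by apply: open_borel; exact: ms_nbhd_open.
have dec k : O k.+1 `<=` O k.
  by apply: ms_nbhd_le; rewrite lef_pV2 ?posrE // ler_nat.
have := nonincreasing_cvg_mu hO dec; rewrite ms_closed_bigcap_nbhd //.
move=> /cvgrPdist_lt /(_ t t0) [N _ /(_ N (leqnn N))] /=.
by rewrite ltr_distlC => /andP [_ /ltW]; exists N.+1%:R^-1; rewrite ?invr_gt0.
Qed.

End measure_basics.

Lemma finite_borel_measure_preimage {R : realType} {X Y : metric_space R}
  {h : X -> Y} {nu : set X -> R} :
  lip1 h -> finite_borel_measure nu -> finite_borel_measure (fun A => nu (h @^-1` A)).
Proof.
move=> hh hnu; split => /=.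
- by rewrite preimage_set0 (mu0 hnu).
- by move=> A hA; apply: (mu_ge0 hnu); exact: lip1_borel.
- move=> F hF tF; rewrite preimage_bigcup; apply: (mu_sigma_additive hnu).
    by move=> n; exact: lip1_borel.
  move=> i j _ _ [x [Fi Fj]]; apply: tF => //; by exists (h x).
Qed.

Section regularity.
Context {R : realType} {X : metric_space R} {mu : set X -> R}
  (hmu : finite_borel_measure mu).
Local Notation B := (@ms_borel R X).

Definition regular_set (A : set X) := B A /\ forall e, 0 < e ->
  exists F O, [/\ ms_closed F, ms_open O, F `<=` A, A `<=` O & mu (O `\` F) <= e].

Lemma regular_closed {F} : ms_closed F -> regular_set F.
Proof.
move=> cF; split; first exact: closed_borel.
move=> e e0; have [r r0 hr] := mu_nbhd_closed hmu cF e0.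
exists F, (ms_nbhd F r); split => //; first exact: ms_nbhd_open.
  exact: ms_nbhdS.
rewrite (mu_setD hmu); [lra | | exact: closed_borel | exact: ms_nbhdS].
by apply: open_borel; exact: ms_nbhd_open.
Qed.

Lemma regular_setC {A} : regular_set A -> regular_set (~` A).
Proof.
case=> hA h; split; first exact: borelC.
move=> e e0; have [F [Op [cF oO FA AO hFO]]] := h e e0.
exists (~` Op), (~` F); split; [by rewrite /ms_closed setCK | exact: cF |
  exact: subsetC | exact: subsetC |].
by rewrite setDE setCK setIC -setDE.
Qed.

Lemma mu_bigcup_geometric {C : nat -> set X} {e} : (forall k, B (C k)) ->
  (forall k, mu (C k) <= e / 2 ^+ k.+1) -> mu (\bigcup_k C k) <= e.
Proof.
move=> hC hCe; apply: (mu_sigma_subadditive hmu) => // n.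
have e0 : 0 <= e.
  have := le_trans (mu_ge0 hmu (hC 0%N)) (hCe 0%N).
  by rewrite pmulr_lge0 // invr_gt0 exprn_gt0.
have geom m : \sum_(0 <= k < m) (2 ^+ k.+1)^-1 = 1 - (2 ^+ m)^-1 :> R.
  elim: m => [|m ih]; first by rewrite big_geq // expr0 invr1 subrr.
  rewrite big_nat_recr //= ih exprS invfM.
  have : 0 < (2 ^+ m : R)^-1 by rewrite invr_gt0 exprn_gt0.
  move: ((2 ^+ m : R)^-1) => x x0; lra.
apply: le_trans (ler_sum _ (fun k _ => hCe k)) _.
rewrite -mulr_sumr geom ler_piMr // lerBlDr lerDl invr_ge0 exprn_ge0 //.
Qed.

Lemma mu_bigcup_finite_approx {F : nat -> set X} {e} : (forall k, B (F k)) ->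
  0 < e -> exists N, mu (\bigcup_k F k) <= mu (\bigcup_(k in `I_N) F k) + e.
Proof.
move=> hF e0; pose G N := \bigcup_(k in `I_N) F k.
have hG N : B (G N).
  rewrite /G bigcup_mkord; apply: (big_ind (fun S => B S)) => //; first exact: borel0.
  by move=> *; exact: borelU.
have incG N : G N `<=` G N.+1 by move=> x [k /= hk Fx]; exists k => //=; exact: ltnW.
have -> : \bigcup_k F k = \bigcup_N G N.
  apply/seteqP; split; last by move=> x [N _ [k _ Fx]]; exists k.
  by move=> x [k _ Fx]; exists k.+1 => //; exists k => /=.
move/cvgrPdist_lt : (nondecreasing_cvg_mu hmu hG incG) => /(_ e e0) [N _ /(_ N (leqnn N))].
by rewrite ltr_distlC => /andP [h _]; exists N; lra.
Qed.

Lemma regular_bigcup {A : nat -> set X} : (forall n, regular_set (A n)) ->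
  regular_set (\bigcup_n A n).
Proof.
move=> hA; split; first by apply: borel_bigcup => n; case: (hA n).
move=> e e0; have e20 : 0 < e / 2 by rewrite divr_gt0.
have /choice [FO hFO] : forall k, exists FO : set X * set X, [/\ ms_closed FO.1,
    ms_open FO.2, FO.1 `<=` A k, A k `<=` FO.2 & mu (FO.2 `\` FO.1) <= e / 2 / 2 ^+ k.+1].
  move=> k; have [_ /(_ (e / 2 / 2 ^+ k.+1)) []] := hA k.
    by rewrite divr_gt0 // exprn_gt0.
  by move=> F [Op hFO]; exists (F, Op).
pose F k := (FO k).1; pose O k := (FO k).2.
have cF k : ms_closed (F k) by case: (hFO k).
have oO k : ms_open (O k) by case: (hFO k).
have FO_sub k : F k `<=` O k by case: (hFO k) => _ _ FA AO _; exact: subset_trans FA AO.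
have hFB := closed_borel (cF _); have hOB := open_borel (oO _).
have [N hN] := mu_bigcup_finite_approx hFB e20.
have hFuB := borel_bigcup hFB; have hOuB := borel_bigcup hOB.
have hGB : B (\bigcup_(k in `I_N) F k) := closed_borel (ms_closed_bigcup_ord N cF).
have sGF : \bigcup_(k in `I_N) F k `<=` \bigcup_k F k by move=> x [k _ Fx]; exists k.
have sFO : \bigcup_k F k `<=` \bigcup_k O k by move=> x [k _ /FO_sub Ox]; exists k.
have hOF : mu (\bigcup_k O k `\` \bigcup_k F k) <= e / 2.
  apply: le_trans (mu_bigcup_geometric (C := fun k => O k `\` F k) _ _).
  - apply: (mu_mono hmu); [exact: borelD | by apply: borel_bigcup => k; exact: borelD |].
    by move=> x [[k _ Ox] nF]; exists k => //; split => // Fx; apply: nF; exists k.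
  - by move=> k; exact: borelD.
  - by move=> k; case: (hFO k).
exists (\bigcup_(k in `I_N) F k), (\bigcup_k O k); split.
- exact: ms_closed_bigcup_ord.
- exact: ms_open_bigcup.
- by move=> x [k _ Fx]; exists k => //; case: (hFO k) => _ _ FA _ _; exact: FA.
- by move=> x [k _ Ax]; exists k => //; case: (hFO k) => _ _ _ AO _; exact: AO.
rewrite (mu_setD hmu) //; last exact: subset_trans sGF sFO.
move: hOF; rewrite (mu_setD hmu) //; lra.
Qed.

Lemma borel_regular {A} : B A -> regular_set A.
Proof.
move: A; apply: smallest_sub.
  split.
  - exact/regular_closed/ms_closed0.
  - by move=> S hS; rewrite setTD; exact: regular_setC.
  - by move=> F hF; exact: regular_bigcup.
move=> O oO; rewrite -(setCK O); apply: regular_setC; apply: regular_closed.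
by rewrite /ms_closed setCK.
Qed.

Lemma inner_regular {A e} : B A -> 0 < e ->
  exists2 F, ms_closed F /\ F `<=` A & mu A <= mu F + e.
Proof.
move=> hA e0; have [_ /(_ e e0) [F [Op [cF oO FA AO h]]]] := borel_regular hA.
have hOF := subset_trans FA AO.
exists F => //; move: h; rewrite (mu_setD hmu (open_borel oO) (closed_borel cF) hOF).
by have := mu_mono hmu hA (open_borel oO) AO; lra.
Qed.

End regularity.

Lemma le_mu_closed_borel {R : realType} {X : metric_space R} (mu nu : set X -> R) :
  finite_borel_measure mu -> finite_borel_measure nu ->
  (forall F, ms_closed F -> mu F <= nu F) -> forall A, ms_borel A -> mu A <= nu A.
Proof.
move=> hmu hnu hF A hA; apply/ler_addgt0Pr => t t0.
have [F [cF FA] hAF] := inner_regular hmu hA t0.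
have := hF F cF; have := mu_mono hnu (closed_borel cF) hA FA; lra.
Qed.

Lemma filter_seq_all (U : set_system nat) (FU : Filter U) {T : eqType}
  (P : T -> set nat) (s : seq T) :
  (forall S, S \in s -> U (P S)) -> U [set n | forall S, S \in s -> P S n].
Proof.
elim: s => [|a l ih] h; first by apply: filterS filterT => n _ S; rewrite in_nil.
have hl := ih (fun S hS => h S (introT orP (or_intror hS))).
apply: filterS (filterI (h a (mem_head a l)) hl) => n [Pa Pl] S.
by rewrite in_cons => /orP [/eqP -> //|]; exact: Pl.
Qed.

Section compactness.
Context {R : realType} {X : metric_space R} (cX : ms_compact X).

Lemma ulimit_exists {U : set_system nat} (s : nat -> X) : UltraFilter U ->
  exists x, forall d, 0 < d -> U [set n | ms_dist x (s n) < d].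
Proof.
move=> hU; apply: contrapT => hn.
have hx x : exists2 d, 0 < d & ~ U [set n | ms_dist x (s n) < d].
  apply: contrapT => hx; apply: hn; exists x => d d0.
  by apply: contrapT => hd; apply: hx; exists d.
pose C := [set S : set X | exists x d,
  [/\ 0 < d, ~ U [set n | ms_dist x (s n) < d] & S = ms_ball x d]].
have oC S : C S -> ms_open S by move=> [x [d [_ _ ->]]]; exact: ms_ball_open.
have covC x : exists2 S, C S & S x.
  have [d d0 hd] := hx x; exists (ms_ball x d); first by exists x, d.
  by rewrite /ms_ball /= ms_dist_xx.
have [s0 [s0C s0cov]] := cX C oC covC.
have : U [set n | forall S, S \in s0 -> ~ S (s n)].
  apply: filter_seq_all => S /s0C [x [d [d0 nU ->]]].
  by have [//|/filterS] := in_ultra_setVsetC [set n | ms_dist x (s n) < d] hU; apply.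
move=> /filter_ex [n hn2]; have [S S0 Sn] := s0cov (s n).
exact: hn2 S S0 Sn.
Qed.

Lemma ms_compact_bounded (p : X) : exists K : R, forall x, ms_dist p x < K.
Proof.
pose C := [set S : set X | exists k : nat, S = ms_ball p k%:R].
have oC S : C S -> ms_open S by move=> [k ->]; exact: ms_ball_open.
have covC x : exists2 S, C S & S x.
  exists (ms_ball p (Num.truncn (ms_dist p x)).+1%:R); first by eexists.
  exact: truncnS_gt.
have [s0 [s0C s0cov]] := cX C oC covC.
suff [K hK] : exists K : R, forall S x, S \in s0 -> S x -> ms_dist p x < K.
  by exists K => x; have [S S0 Sx] := s0cov x; exact: hK S x S0 Sx.
elim: s0 s0C {s0cov} => [|a l ih] hC; first by exists 0 => S x; rewrite in_nil.
have [k ak] := hC a (mem_head a l).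
have [K hK] := ih (fun S hS => hC S (introT orP (or_intror hS))).
exists (Num.max k%:R K) => S x; rewrite in_cons => /orP [/eqP -> |hS Sx].
  by rewrite ak /ms_ball /= => h; rewrite lt_max h.
by rewrite lt_max (hK S x hS Sx) orbT.
Qed.

End compactness.

Section sum_space.
Context {R : realType} (X Y : metric_space R) (x0 : X) (y0 : Y).

Definition sum_dist (a b : X + Y) : R :=
  match a, b with
  | inl x, inl x' => ms_dist x x'
  | inr y, inr y' => ms_dist y y'
  | inl x, inr y | inr y, inl x => ms_dist x x0 + 1 + ms_dist y0 y
  end.

Lemma sum_dist_eq0 a b : sum_dist a b = 0 <-> a = b.
Proof.
case: a b => [x|y] [x'|y'] /=.
- by split => [/ms_dist_eq0 -> // | [] <-]; apply/ms_dist_eq0.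
- split => // h; exfalso; have := ms_dist_ge0 x x0; have := ms_dist_ge0 y0 y'; lra.
- split => // h; exfalso; have := ms_dist_ge0 x' x0; have := ms_dist_ge0 y0 y; lra.
- by split => [/ms_dist_eq0 -> // | [] <-]; apply/ms_dist_eq0.
Qed.

Lemma sum_dist_sym a b : sum_dist a b = sum_dist b a.
Proof. by case: a b => [x|y] [x'|y'] //=; rewrite ms_dist_sym. Qed.

Lemma sum_dist_tri a b c : sum_dist a c <= sum_dist a b + sum_dist b c.
Proof.
case: a b c => [x|y] [x'|y'] [x''|y''] /=; try exact: ms_dist_tri.
- have := ms_dist_tri x x' x0; have := ms_dist_ge0 y0 y''; lra.
- have := ms_dist_tri x x0 x''; rewrite (ms_dist_sym x0 x'').
  have := ms_dist_ge0 y0 y'; lra.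
- have := ms_dist_tri y0 y' y''; lra.
- have := ms_dist_tri x'' x' x0; rewrite (ms_dist_sym x'' x'); lra.
- have := ms_dist_tri y y0 y''; rewrite (ms_dist_sym y y0).
  have := ms_dist_ge0 x' x0; lra.
- have := ms_dist_tri y0 y' y; rewrite (ms_dist_sym y' y); lra.
Qed.

Definition sum_space : metric_space R :=
  MetricSpace sum_dist_eq0 sum_dist_sym sum_dist_tri.

End sum_space.

Section ghp_close.
Context {R : realType}.

Definition ghp_close (e : R) {X Y : cmm_space R} {Z : metric_space R}
    (f : X -> Z) (g : Y -> Z) : Prop :=
  [/\ isometric_embedding f, isometric_embedding g,
      forall x, exists y, ms_dist (g y) (f x) < e,
      forall y, exists x, ms_dist (f x) (g y) < e &
      forall F : set Z, ms_closed F ->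
        cmm_mu (f @^-1` F) <= cmm_mu (g @^-1` ms_nbhd F e) + e /\
        cmm_mu (g @^-1` F) <= cmm_mu (f @^-1` ms_nbhd F e) + e].

Context {e : R} {X Y : cmm_space R} {Z : metric_space R} {f : X -> Z} {g : Y -> Z}.

Lemma ghp_close_sym : ghp_close e f g -> ghp_close e g f.
Proof. by case=> hf hg H1 H2 HP; split => // F /HP []. Qed.

Lemma ghp_close_gt0 : ghp_close e f g -> 0 < e.
Proof.
by case=> _ _ H1 _ _; have [y] := H1 (cmm_point X); apply: le_lt_trans; exact: ms_dist_ge0.
Qed.

Lemma ghp_close_mu_image {S : set Y} : ghp_close e f g -> ms_borel S ->
  cmm_mu S <= cmm_mu (f @^-1` ms_nbhd (g @` S) e) + e.
Proof.
case=> hf hg _ _ HP hS; pose K := ms_closure (g @` S).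
have cK : ms_closed K := ms_closure_closed _.
have [lf lg] := (iso_lip1 hf, iso_lip1 hg).
apply: le_trans (le_trans _ (HP K cK).2) _.
  apply: (mu_mono (cmm_measure Y)) => //; first exact: closed_borel (lip1_closed lg cK).
  by move=> y Sy; apply: ms_sub_closure; exists y.
rewrite lerD2r; apply: (mu_mono (cmm_measure X)) (preimage_subset (ms_nbhd_closure _ _)).
- by apply: open_borel; apply: (lip1_open lf); exact: ms_nbhd_open.
- by apply: open_borel; apply: (lip1_open lf); exact: ms_nbhd_open.
Qed.

End ghp_close.

Lemma inf_lt_upclosed {R : realType} (S : set R) e : S !=set0 ->
  (forall a b, S a -> a <= b -> S b) -> inf S < e -> S e.
Proof. by move=> hne up /(inf_lt hne) [a Sa /ltW]; exact: up. Qed.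

Section ghp_witness.
Context {R : realType} {X Y : cmm_space R} {Z : metric_space R} {f : X -> Z} {g : Y -> Z}
  (hf : isometric_embedding f) (hg : isometric_embedding g).

Let H := [set e : R | 0 < e /\ f @` setT `<=` ms_nbhd (g @` setT) e /\
                                g @` setT `<=` ms_nbhd (f @` setT) e].
Let P := [set e : R | 0 < e /\ forall F, ms_closed F ->
  cmm_mu (f @^-1` F) <= cmm_mu (g @^-1` ms_nbhd F e) + e /\
  cmm_mu (g @^-1` F) <= cmm_mu (f @^-1` ms_nbhd F e) + e].

Lemma hausdorff_image_nonempty : H !=set0.
Proof.
pose p := cmm_point X; pose q := cmm_point Y.
have [KX hKX] := ms_compact_bounded (@cmm_compact _ X) p.
have [KY hKY] := ms_compact_bounded (@cmm_compact _ Y) q.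
have := hKX p; have := hKY q; rewrite !ms_dist_xx => KY0 KX0.
have c0 := ms_dist_ge0 (f p) (g q).
exists (ms_dist (f p) (g q) + KX + KY + 1); split; first lra.
split => _ [x _ <-].
- exists (g q); first by exists q.
  have := ms_dist_tri (g q) (f p) (f x); rewrite hf (ms_dist_sym (g q) (f p)).
  have := hKX x; lra.
- exists (f p); first by exists p.
  have := ms_dist_tri (f p) (g q) (g x); rewrite hg; have := hKY x; lra.
Qed.

Lemma prokhorov_image_nonempty : P !=set0.
Proof.
have [mX mY] := (cmm_measure X, cmm_measure Y).
have [lf lg] := (iso_lip1 hf, iso_lip1 hg).
have TX := mu_ge0 mX borelT; have TY := mu_ge0 mY borelT.
set e := cmm_mu [set: X] + cmm_mu [set: Y] + 1.
exists e; split => [|F cF]; first by rewrite /e; lra.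
have oF := ms_nbhd_open F e.
have := mu_le_setT mX (closed_borel (lip1_closed lf cF)).
have := mu_le_setT mY (closed_borel (lip1_closed lg cF)).
have := mu_ge0 mY (open_borel (lip1_open lg oF)).
have := mu_ge0 mX (open_borel (lip1_open lf oF)).
rewrite /e; split; lra.
Qed.

Lemma hausdorff_image_upclosed a b : H a -> a <= b -> H b.
Proof.
move=> [a0 [h1 h2]] ab; split; first exact: lt_le_trans ab.
by split; [apply: subset_trans h1 _ | apply: subset_trans h2 _]; exact: ms_nbhd_le.
Qed.

Lemma prokhorov_image_upclosed a b : P a -> a <= b -> P b.
Proof.
move=> [a0 h] ab; split => [|F cF]; first exact: lt_le_trans ab.
have [mX mY] := (cmm_measure X, cmm_measure Y).
have [lf lg] := (iso_lip1 hf, iso_lip1 hg).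
have oB c := open_borel (lip1_open lf (ms_nbhd_open F c)).
have oB' c := open_borel (lip1_open lg (ms_nbhd_open F c)).
have := mu_mono mX (oB a) (oB b) (preimage_subset (ms_nbhd_le F ab)).
have := mu_mono mY (oB' a) (oB' b) (preimage_subset (ms_nbhd_le F ab)).
have [] := h F cF; split; lra.
Qed.

Lemma ghp_close_of_lt e :
  hausdorff_dist (f @` setT) (g @` setT) +
  prokhorov_dist (fun B => cmm_mu (f @^-1` B)) (fun B => cmm_mu (g @^-1` B)) < e ->
  ghp_close e f g.
Proof.
rewrite /hausdorff_dist /prokhorov_dist -/H -/P => hlt.
have [Hne Pne] := (hausdorff_image_nonempty, prokhorov_image_nonempty).
have H0 : 0 <= inf H by apply: (lb_le_inf Hne) => a [/ltW].
have P0 : 0 <= inf P by apply: (lb_le_inf Pne) => a [/ltW].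
have [_ [hfg hgf]] : H e by apply: inf_lt_upclosed hausdorff_image_upclosed _ => //; lra.
have [_ hP] : P e by apply: inf_lt_upclosed prokhorov_image_upclosed _ => //; lra.
split => //.
- by move=> x; have [_ [y _ <-]] := hfg (f x) (ex_intro2 _ _ x I erefl); exists y.
- by move=> y; have [_ [x _ <-]] := hgf (g y) (ex_intro2 _ _ y I erefl); exists x.
Qed.

End ghp_witness.

Lemma ghp_witness {R : realType} {X Y : cmm_space R} {e : R} : d_GHP X Y < e ->
  exists (Z : metric_space R) (f : X -> Z) (g : Y -> Z), ghp_close e f g.
Proof.
move=> hd; have [|_ [Z [f [g [hf hg ->]]]] hlt] := inf_lt _ hd.
  (* the disjoint union keeps the infimum from ranging over the empty set *)
  pose Z0 := sum_space X Y (cmm_point X) (cmm_point Y).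
  by eexists; exists Z0, (@inl X Y : X -> Z0), (@inr X Y : Y -> Z0); split.
by exists Z, f, g; exact: ghp_close_of_lt.
Qed.

Definition approx_dominating {R : realType} (e : R) {X X' : cmm_space R}
    (psi : X' -> X) : Prop :=
  [/\ forall a b, ms_dist (psi a) (psi b) <= ms_dist a b + e,
      forall x, exists a, ms_dist x (psi a) < e &
      forall F, ms_closed F -> exists2 V, ms_borel V /\ V `<=` psi @^-1` ms_nbhd F e &
        cmm_mu F <= cmm_mu V + e].

Section transfer.
Context {R : realType} {A B Ai Bi : cmm_space R} {e : R} {Z Z' : metric_space R}
  {f : A -> Z} {g : Ai -> Z} {f' : B -> Z'} {g' : Bi -> Z'} {phi : B -> A}.
Hypotheses (hfg : ghp_close e f g) (hfg' : ghp_close e f' g').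
Hypotheses (phi_surj : forall x, exists x', phi x' = x) (phi_lip : lip1 phi)
  (phi_mu : forall S, ms_borel S -> cmm_mu S <= cmm_mu (phi @^-1` S)).

Lemma dist_transport (y z : Ai) (a b : Bi) (x1 x2 : B) :
  ms_dist y z <= ms_dist (g y) (f (phi x1)) + ms_dist (f' x1) (g' a) + ms_dist a b +
                 ms_dist (g' b) (f' x2) + ms_dist (f (phi x2)) (g z).
Proof.
case: hfg => hf hg _ _ _; case: hfg' => hf' hg' _ _ _.
have t1 := ms_dist_tri (g y) (f (phi x1)) (g z).
have t2 := ms_dist_tri (f (phi x1)) (f (phi x2)) (g z).
have t3 : ms_dist (f (phi x1)) (f (phi x2)) <= ms_dist (f' x1) (f' x2).
  by rewrite hf hf'; exact: phi_lip.
have t4 := ms_dist_tri (f' x1) (g' a) (f' x2).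
have t5 := ms_dist_tri (g' a) (g' b) (f' x2).
have := hg y z; have := hg' a b; lra.
Qed.

Lemma exists_transfer_map : exists psi : Bi -> Ai, forall a, exists x',
  ms_dist (f' x') (g' a) < e /\ ms_dist (g (psi a)) (f (phi x')) < e.
Proof.
case: hfg => _ _ H1 _ _; case: hfg' => _ _ _ H2 _.
suff /choice [psi hpsi] : forall a, exists y : Ai, exists x',
    ms_dist (f' x') (g' a) < e /\ ms_dist (g y) (f (phi x')) < e by exists psi.
by move=> a; have [x' hx'] := H2 a; have [y hy] := H1 (phi x'); exists y, x'.
Qed.

Section transfer_map.
Variable psi : Bi -> Ai.
Hypothesis psi_spec : forall a, exists x',
  ms_dist (f' x') (g' a) < e /\ ms_dist (g (psi a)) (f (phi x')) < e.

Lemma transfer_map_lip a b : ms_dist (psi a) (psi b) <= ms_dist a b + 4 * e.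
Proof.
have [xa [ha1 ha2]] := psi_spec a; have [xb [hb1 hb2]] := psi_spec b.
have := dist_transport (psi a) (psi b) a b xa xb.
rewrite (ms_dist_sym (g' b)) (ms_dist_sym (f (phi xb))); lra.
Qed.

Lemma transfer_map_dense y : exists a, ms_dist y (psi a) < 4 * e.
Proof.
case: hfg => _ _ _ H2 _; case: hfg' => _ _ H1' _ _.
have [x hx] := H2 y; have [x' phix'] := phi_surj x; subst x.
have [a ha] := H1' x'; have [x'' [h1 h2]] := psi_spec a; exists a.
have := dist_transport y (psi a) a a x' x''; rewrite ms_dist_xx.
have := ms_dist_sym (g y) (f (phi x')); have := ms_dist_sym (f' x') (g' a).
have := ms_dist_sym (g' a) (f' x''); have := ms_dist_sym (f (phi x'')) (g (psi a)).
lra.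
Qed.

Lemma transfer_map_mu F : ms_closed F ->
  exists2 V, ms_borel V /\ V `<=` psi @^-1` ms_nbhd F (4 * e) &
    cmm_mu F <= cmm_mu V + 4 * e.
Proof.
move=> cF; have [hf _ _ _ _] := hfg; have [_ hg' _ _ _] := hfg'.
pose S := f @^-1` ms_nbhd (g @` F) e; pose T := phi @^-1` S.
have oS : ms_open S := lip1_open (iso_lip1 hf) (ms_nbhd_open _ _).
have oT : ms_open T := lip1_open phi_lip oS.
exists (g' @^-1` ms_nbhd (f' @` T) e); first split.
- exact: open_borel (lip1_open (iso_lip1 hg') (ms_nbhd_open _ _)).
- move=> a [_ [x' [_ [y Fy <-] hy] <-] hx'a]; exists y => //.
  have [x'' [h1 h2]] := psi_spec a.
  have := dist_transport y (psi a) a a x' x''; rewrite ms_dist_xx.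
  rewrite (ms_dist_sym (g' a)) (ms_dist_sym (f (phi x''))); lra.
have m1 := ghp_close_mu_image hfg (closed_borel cF).
have m2 := phi_mu S (open_borel oS).
have m3 := ghp_close_mu_image (ghp_close_sym hfg') (open_borel oT).
have := ghp_close_gt0 hfg; rewrite -/S -/T in m1 m2 m3; lra.
Qed.

Lemma transfer_map_approx_dominating : approx_dominating (4 * e) psi.
Proof.
split; [exact: transfer_map_lip | exact: transfer_map_dense | exact: transfer_map_mu].
Qed.

End transfer_map.

Lemma exists_approx_dominating : exists psi : Bi -> Ai, approx_dominating (4 * e) psi.
Proof.
have [psi hpsi] := exists_transfer_map.
by exists psi; exact: transfer_map_approx_dominating.
Qed.

End transfer.

Lemma filter_ex3 {T : Type} {U : set_system T} (PU : ProperFilter U) {P Q S : set T} :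
  U P -> U Q -> U S -> exists n, [/\ P n, Q n & S n].
Proof.
move=> hP hQ hS; have : U (P `&` (Q `&` S)) by apply: filterI => //; exact: filterI.
by move=> /filter_ex [n [? [? ?]]]; exists n.
Qed.

Section ultralimit.
Context {R : realType} {X X' : cmm_space R} {e : nat -> R} {psi : nat -> X' -> X}.
Hypotheses (e_cvg0 : e @ \oo --> 0) (hpsi : forall n, approx_dominating (e n) (psi n)).
Context {U : set_system nat}.
Hypotheses (U_ultra : UltraFilter U) (U_fine : eventually `<=` U).
Context {Phi : X' -> X}.
Hypothesis Phi_ulim : forall a d, 0 < d -> U [set n | ms_dist (Phi a) (psi n a) < d].

Let U_proper : ProperFilter U := @ultra_proper _ _ U_ultra.

Lemma ulim_e_lt {c} : 0 < c -> U [set n | e n < c].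
Proof.
move=> c0; apply: U_fine; move/cvgrPdist_lt : e_cvg0 => /(_ c c0).
by apply: filterS => n /=; rewrite sub0r normrN; exact: le_lt_trans (ler_norm _).
Qed.

Lemma ulim_lip1 : lip1 Phi.
Proof.
move=> a b; apply/ler_addgt0Pr => d d0; have d3 : 0 < d / 3 by rewrite divr_gt0.
have [n [h1 h2 h3]] := filter_ex3 U_proper (Phi_ulim a _ d3) (Phi_ulim b _ d3) (ulim_e_lt d3).
have [lip _ _] := hpsi n; have := lip a b.
have := ms_dist_tri (Phi a) (psi n a) (Phi b).
have := ms_dist_tri (psi n a) (psi n b) (Phi b).
have := ms_dist_sym (psi n b) (Phi b); rewrite /= in h1 h2 h3; lra.
Qed.

Lemma ulim_uniform {d} : 0 < d -> U [set n | forall a, ms_dist (Phi a) (psi n a) < d].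
Proof.
move=> d0; have d4 : 0 < d / 4 by rewrite divr_gt0.
pose C := [set S : set X' | exists b, S = ms_ball b (d / 4)].
have oC S : C S -> ms_open S by move=> [b ->]; exact: ms_ball_open.
have covC a : exists2 S, C S & S a.
  by exists (ms_ball a (d / 4)); [exists a | rewrite /ms_ball /= ms_dist_xx].
have [s0 [s0C s0cov]] := @cmm_compact _ X' C oC covC.
have hall : U [set n | forall S, S \in s0 -> exists b,
    S = ms_ball b (d / 4) /\ ms_dist (Phi b) (psi n b) < d / 4].
  apply: filter_seq_all => S /s0C [b ->].
  by apply: filterS (Phi_ulim b _ d4) => n hn; exists b.
apply: filterS (filterI hall (ulim_e_lt d4)) => n [hn /= he] a.
have [S S0 Sa] := s0cov a; have [b [eS hb]] := hn S S0.
rewrite eS /ms_ball /= in Sa; have [lip _ _] := hpsi n.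
have := ulim_lip1 a b; have := ms_dist_sym a b; have := lip b a.
have := ms_dist_tri (Phi a) (Phi b) (psi n a).
have := ms_dist_tri (Phi b) (psi n b) (psi n a); lra.
Qed.

Lemma ulim_surj y : exists a, Phi a = y.
Proof.
have /choice [an han] : forall n, exists a, ms_dist y (psi n a) < e n.
  by move=> n; have [_ dense _] := hpsi n; exact: dense.
have [a0 ha0] := ulimit_exists (@cmm_compact _ X') an U_ultra.
exists a0; apply/ms_dist_eq0/eqP; rewrite eq_le ms_dist_ge0 andbT.
apply/ler_addgt0Pr => d d0; rewrite add0r.
have d3 : 0 < d / 3 by rewrite divr_gt0.
have d6 : 0 < d / 6 by rewrite divr_gt0.
have [n [h1 h2 h3]] := filter_ex3 U_proper (Phi_ulim a0 _ d3) (ha0 _ d3) (ulim_e_lt d6).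
have [lip _ _] := hpsi n; rewrite /= in h1 h2 h3.
have := ms_dist_tri (Phi a0) (psi n a0) y.
have := ms_dist_tri (psi n a0) (psi n (an n)) y.
have := lip a0 (an n); have := han n; have := ms_dist_sym y (psi n (an n)); lra.
Qed.

Lemma ulim_mu_nbhd {F r} : ms_closed F -> 0 < r ->
  cmm_mu F <= cmm_mu (Phi @^-1` ms_nbhd F r).
Proof.
move=> cF r0; apply/ler_addgt0Pr => t t0; have r2 : 0 < r / 2 by rewrite divr_gt0.
have [n [hu he1 he2]] := filter_ex3 U_proper (ulim_uniform r2) (ulim_e_lt r2) (ulim_e_lt t0).
have [_ _ /(_ F cF) [V [hV sV] hFV]] := hpsi n; rewrite /= in hu he1 he2.
have sub : V `<=` Phi @^-1` ms_nbhd F r.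
  move=> a /sV [y Fy hy]; exists y => //.
  have := ms_dist_tri y (psi n a) (Phi a); have := hu a.
  have := ms_dist_sym (psi n a) (Phi a); lra.
have oW := open_borel (lip1_open ulim_lip1 (ms_nbhd_open F r)).
have := mu_mono (cmm_measure X') hV oW sub; lra.
Qed.

Lemma ulim_mu_closed {F} : ms_closed F -> cmm_mu F <= cmm_mu (Phi @^-1` F).
Proof.
move=> cF; apply/ler_addgt0Pr => t t0.
have hnu := finite_borel_measure_preimage ulim_lip1 (cmm_measure X').
have [r r0 /= hr] := mu_nbhd_closed hnu cF t0.
have := ulim_mu_nbhd cF r0; lra.
Qed.

End ultralimit.

Lemma ghp_le_of_approx_dominating {R : realType} {X X' : cmm_space R} (e : nat -> R)
    (psi : nat -> X' -> X) :
  e @ \oo --> 0 -> (forall n, approx_dominating (e n) (psi n)) -> ghp_le X X'.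
Proof.
move=> e_cvg0 hpsi; have [U [U_ultra U_fine]] := ultraFilterLemma (@eventually_filter).
have /choice [Phi Phi_ulim] : forall a, exists x, forall d, 0 < d ->
    U [set n | ms_dist x (psi n a) < d].
  by move=> a; exact: (ulimit_exists (@cmm_compact _ X) (fun n => psi n a) U_ultra).
have lip := ulim_lip1 e_cvg0 hpsi U_ultra U_fine Phi_ulim.
exists Phi; split => //.
- by move=> x; exact: (ulim_surj e_cvg0 hpsi U_ultra U_fine Phi_ulim x).
- apply: le_mu_closed_borel (cmm_measure X) _ _.
    exact: finite_borel_measure_preimage lip (cmm_measure X').
  by move=> F cF; exact: (ulim_mu_closed e_cvg0 hpsi U_ultra U_fine Phi_ulim cF).
Qed.

Theorem proposition3p11 (R : realType) (X X' : nat -> cmm_space R)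
  (Xinf X'inf : cmm_space R) :
  d_GHP (X n) Xinf @[n --> \oo] --> 0 ->
  d_GHP (X' n) X'inf @[n --> \oo] --> 0 ->
  (forall n, ghp_le (X n) (X' n)) ->
  ghp_le Xinf X'inf.
Proof.
move=> cX cX' hle.
(* the harmonic term keeps eps n strictly above both distances *)
pose eps n := `|d_GHP (X n) Xinf| + `|d_GHP (X' n) X'inf| + n.+1%:R^-1.
have eps_cvg0 : (fun n => 4 * eps n) @ \oo --> 0.
  rewrite -(mulr0 4); apply: cvgMr.
  have := cvgD (cvgD (cvg_norm cX) (cvg_norm cX')) (@cvg_harmonic R).
  by rewrite normr0 !addr0; apply.
have hlt n : d_GHP (X n) Xinf < eps n /\ d_GHP (X' n) X'inf < eps n.
  have : 0 < (n.+1%:R : R)^-1 by rewrite invr_gt0.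
  rewrite /eps; move: (n.+1%:R^-1) => q q0.
  have := ler_norm (d_GHP (X n) Xinf); have := ler_norm (d_GHP (X' n) X'inf).
  have := normr_ge0 (d_GHP (X n) Xinf); have := normr_ge0 (d_GHP (X' n) X'inf).
  by split; lra.
have /choice [psi hpsi] n : exists psi : X'inf -> Xinf, approx_dominating (4 * eps n) psi.
  have [lt_X lt_X'] := hlt n; have [phi [phi_surj phi_lip phi_mu]] := hle n.
  have [Z [f [g hfg]]] := ghp_witness lt_X; have [Z' [f' [g' hfg']]] := ghp_witness lt_X'.
  exact: exists_approx_dominating hfg hfg' phi_surj phi_lip phi_mu.
exact: ghp_le_of_approx_dominating eps_cvg0 hpsi.
Qed.
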